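(* Let $(H,\mu_H,\Delta_H,\alpha_H)$ be a Hom-bialgebra, $(A,\mu_A,\alpha_A)$ a left $H$-module Hom-algebra with action $h\otimes a\mapsto h\cdot a$, and $(C,\mu_C,\alpha_C)$ a right $H$-module Hom-algebra with action $c\otimes h\mapsto c\cdot h$, with $\alpha_H,\alpha_A,\alpha_C$ bijective. Consider the Hom-twisting maps $R_1:H\otimes A\to A\otimes H$, $R_1(h\otimes a)=\alpha_H^{-2}(h_1)\cdot\alpha_A^{-1}(a)\otimes\alpha_H^{-1}(h_2)$, $R_2:C\otimes H\to H\otimes C$, $R_2(c\otimes h)=\alpha_H^{-1}(h_1)\otimes\alpha_C^{-1}(c)\cdot\alpha_H^{-2}(h_2)$, and $R_3:C\otimes A\to A\otimes C$, $R_3(c\otimes a)=a\otimes c$. Then $(\mathrm{id}_A\otimes R_2)\circ(R_3\otimes\mathrm{id}_H)\circ(\mathrm{id}_C\otimes R_1)=(R_1\otimes\mathrm{id}_C)\circ(\mathrm{id}_H\otimes R_3)\circ(R_2\otimes\mathrm{id}_A)$; consequently the iterated Hom-twisted tensor product $A\# H\# C:=A\otimes_{R_1}H\otimes_{R_2}C$ is a Hom-associative algebra on $A\otimes H\otimes C$ with structure map $\alpha_A\otimes\alpha_H\otimes\alpha_C$ and multiplication $(a\# h\# c)(a'\# h'\# c')=a(\alpha_H^{-2}(h_1)\cdot\alpha_A^{-1}(a'))\#\alpha_H^{-1}(h_2h'_1)\#(\alpha_C^{-1}(c)\cdot\alpha_H^{-2}(h'_2))c'$.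
   Context: Over a field $k$, no (co)units; $\Delta(h)=h_1\otimes h_2$. Hom-associative algebra $(A,\mu,\alpha)$: $\alpha(aa')=\alpha(a)\alpha(a')$, $\alpha(a)(a'a'')=(aa')\alpha(a'')$. Hom-bialgebra $(H,\mu,\Delta,\alpha)$: $(H,\mu,\alpha)$ Hom-associative, $\Delta(h_1)\otimes\alpha(h_2)=\alpha(h_1)\otimes\Delta(h_2)$, $\Delta(hh')=h_1h'_1\otimes h_2h'_2$, $\Delta(\alpha(h))=\alpha(h_1)\otimes\alpha(h_2)$. Left $H$-module Hom-algebra: Hom-associative $(A,\mu_A,\alpha_A)$ with action satisfying $\alpha_A(h\cdot a)=\alpha_H(h)\cdot\alpha_A(a)$, $\alpha_H(h)\cdot(h'\cdot a)=(hh')\cdot\alpha_A(a)$, $\alpha_H^2(h)\cdot(aa')=(h_1\cdot a)(h_2\cdot a')$. Right $H$-module Hom-algebra: Hom-associative $(C,\mu_C,\alpha_C)$ with action satisfying $\alpha_C(c\cdot h)=\alpha_C(c)\cdot\alpha_H(h)$, $(c\cdot h)\cdot\alpha_H(h')=\alpha_C(c)\cdot(hh')$, $(cc')\cdot\alpha_H^2(h)=(c\cdot h_1)(c'\cdot h_2)$. A Hom-twisting map between Hom-associative $A$ and $B$ is linear $R:B\otimes A\to A\otimes B$ with $(\alpha_A\otimes\alpha_B)\circ R=R\circ(\alpha_B\otimes\alpha_A)$, $R\circ(\alpha_B\otimes\mu_A)=(\mu_A\otimes\alpha_B)\circ(\mathrm{id}\otimes R)\circ(R\otimes\mathrm{id})$,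 $R\circ(\mu_B\otimes\alpha_A)=(\alpha_A\otimes\mu_B)\circ(R\otimes\mathrm{id})\circ(\mathrm{id}\otimes R)$ ($R_1,R_2,R_3$ above are such maps). Given Hom-twisting maps $R_1:B\otimes A\to A\otimes B$, $R_2:C\otimes B\to B\otimes C$, $R_3:C\otimes A\to A\otimes C$ satisfying the braid relation, the iterated Hom-twisted tensor product $A\otimes_{R_1}B\otimes_{R_2}C$ is $A\otimes B\otimes C$ with structure map $\alpha_A\otimes\alpha_B\otimes\alpha_C$ and product $(a\otimes b\otimes c)(a'\otimes b'\otimes c')=a(a'_{R_3})_{R_1}\otimes b_{R_1}b'_{R_2}\otimes(c_{R_3})_{R_2}c'$, where $R_i(y\otimes x)=x_{R_i}\otimes y_{R_i}$. *)

(* Tensor products are not available in MathComp; we model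
   an element of U (x) V (resp. U (x) V (x) W) by a finite list of pure
   tensors, i.e. the formal sum of its entries, and equality in the tensor
   product by the universal property: two formal sums are equal iff every
   bilinear (trilinear) map into every K-vector space agrees on them. *)
From HB Require Import structures.
From mathcomp Require Import all_boot all_algebra.
Set Implicit Arguments.
Unset Strict Implicit.
Unset Printing Implicit Defensive.
Import GRing.Theory.
Local Open Scope ring_scope.

Section Tensors.
Variable K : fieldType.

Definition islin (U V : lmodType K) (f : U -> V) : Prop :=
  forall (a : K) (x y : U), f (a *: x + y) = a *: f x + f y.

Definition bilin (U V W : lmodType K) (f : U -> V -> W) : Prop :=
  (forall u, islin (f u)) /\ (forall v, islin (fun u => f u v)).

Definition trilin (U V X W : lmodType K) (f : U -> V -> X -> W) : Prop :=
  [/\ forall u v, islin (f u v),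
      forall u x, islin (fun v => f u v x) &
      forall v x, islin (fun u => f u v x)].

Definition teq2 (U V : lmodType K) (s t : seq (U * V)) : Prop :=
  forall (W : lmodType K) (f : U -> V -> W), bilin f ->
    \sum_(p <- s) f p.1 p.2 = \sum_(p <- t) f p.1 p.2.

Definition teq3 (U V X : lmodType K) (s t : seq (U * V * X)) : Prop :=
  forall (W : lmodType K) (f : U -> V -> X -> W), trilin f ->
    \sum_(p <- s) f p.1.1 p.1.2 p.2 = \sum_(p <- t) f p.1.1 p.1.2 p.2.

(* f (x) id and id (x) f on triple tensors, for f : X (x) Y -> X' (x) Y'
   given on pure tensors *)
Definition tens_l (X Y Z X' Y' : Type) (f : X -> Y -> seq (X' * Y'))
  (s : seq (X * Y * Z)) : seq (X' * Y' * Z) :=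
  flatten [seq [seq (q.1, q.2, p.2) | q <- f p.1.1 p.1.2] | p <- s].

Definition tens_r (X Y Z Y' Z' : Type) (f : Y -> Z -> seq (Y' * Z'))
  (s : seq (X * Y * Z)) : seq (X * Y' * Z') :=
  flatten [seq [seq (p.1.1, q.1, q.2) | q <- f p.1.2 p.2] | p <- s].

Definition hom_assoc (A : lmodType K) (mu : A -> A -> A) (al : A -> A) : Prop :=
  [/\ bilin mu, islin al,
      forall a a', al (mu a a') = mu (al a) (al a') &
      forall a a' a'', mu (al a) (mu a' a'') = mu (mu a a') (al a'')].

(* Hom-bialgebra (H, mu, Delta, al); Delta h is a formal sum of pure tensors
   representing Delta(h) = h_1 (x) h_2 *)
Definition hom_bialg (H : lmodType K) (mu : H -> H -> H)
  (Delta : H -> seq (H * H)) (al : H -> H) : Prop :=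
  [/\ hom_assoc mu al,
      forall (a : K) h h', teq2 (Delta (a *: h + h'))
        ([seq (a *: p.1, p.2) | p <- Delta h] ++ Delta h'),
      (* Delta(h_1) (x) al(h_2) = al(h_1) (x) Delta(h_2) *)
      forall h, teq3 [seq (q.1, q.2, al p.2) | p <- Delta h, q <- Delta p.1]
                     [seq (al p.1, q.1, q.2) | p <- Delta h, q <- Delta p.2],
      forall h h', teq2 (Delta (mu h h'))
                        [seq (mu p.1 q.1, mu p.2 q.2) | p <- Delta h, q <- Delta h'] &
      forall h, teq2 (Delta (al h)) [seq (al p.1, al p.2) | p <- Delta h]].

Definition left_mod_hom_alg (H : lmodType K) (muH : H -> H -> H)
  (Delta : H -> seq (H * H)) (alH : H -> H)
  (A : lmodType K) (muA : A -> A -> A) (alA : A -> A) (act : H -> A -> A) : Prop :=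
  [/\ hom_assoc muA alA, bilin act,
      forall h a, alA (act h a) = act (alH h) (alA a),
      forall h h' a, act (alH h) (act h' a) = act (muH h h') (alA a) &
      forall h a a', act (alH (alH h)) (muA a a')
                     = \sum_(p <- Delta h) muA (act p.1 a) (act p.2 a')].

Definition right_mod_hom_alg (H : lmodType K) (muH : H -> H -> H)
  (Delta : H -> seq (H * H)) (alH : H -> H)
  (C : lmodType K) (muC : C -> C -> C) (alC : C -> C) (ract : C -> H -> C) : Prop :=
  [/\ hom_assoc muC alC, bilin ract,
      forall c h, alC (ract c h) = ract (alC c) (alH h),
      forall c h h', ract (ract c h) (alH h') = ract (alC c) (muH h h') &
      forall c c' h, ract (muC c c') (alH (alH h))
                     = \sum_(p <- Delta h) muC (ract c p.1) (ract c' p.2)].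

(* R : Y (x) X -> X (x) Y given on pure tensors, R y x = R(y (x) x), is a
   Hom-twisting map between (X, muX, alX) and (Y, muY, alY) *)
Definition hom_twisting (X Y : lmodType K) (muX : X -> X -> X) (alX : X -> X)
  (muY : Y -> Y -> Y) (alY : Y -> Y) (R : Y -> X -> seq (X * Y)) : Prop :=
  [/\ forall y x, teq2 [seq (alX p.1, alY p.2) | p <- R y x] (R (alY y) (alX x)),
      forall y x x', teq2 (R (alY y) (muX x x'))
        [seq (muX p.1 q.1, alY q.2) | p <- R y x, q <- R p.2 x'] &
      forall y y' x, teq2 (R (muY y y') (alX x))
        [seq (alX q.1, muY q.2 p.2) | p <- R y' x, q <- R y p.1]].

(* product of the iterated Hom-twisted tensor product X (x)_{R1} Y (x)_{R2} Z
   on pure tensors: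
   (a (x) b (x) c)(a' (x) b' (x) c') = a (a'_{R3})_{R1} (x) b_{R1} b'_{R2}
                                        (x) (c_{R3})_{R2} c' *)
Definition itp_pure (X Y Z : Type) (muX : X -> X -> X) (muY : Y -> Y -> Y)
  (muZ : Z -> Z -> Z) (R1 : Y -> X -> seq (X * Y)) (R2 : Z -> Y -> seq (Y * Z))
  (R3 : Z -> X -> seq (X * Z)) (u v : X * Y * Z) : seq (X * Y * Z) :=
  flatten [seq [seq (muX u.1.1 r1.1, muY r1.2 r2.1, muZ r2.2 v.2)
                  | r1 <- R1 u.1.2 r3.1, r2 <- R2 r3.2 v.1.2]
          | r3 <- R3 u.2 v.1.1].

Definition itp (X Y Z : Type) (muX : X -> X -> X) (muY : Y -> Y -> Y)
  (muZ : Z -> Z -> Z) (R1 : Y -> X -> seq (X * Y)) (R2 : Z -> Y -> seq (Y * Z))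
  (R3 : Z -> X -> seq (X * Z)) (s t : seq (X * Y * Z)) : seq (X * Y * Z) :=
  flatten [seq itp_pure muX muY muZ R1 R2 R3 u v | u <- s, v <- t].

Definition alpha3 (X Y Z : Type) (alX : X -> X) (alY : Y -> Y) (alZ : Z -> Z)
  (s : seq (X * Y * Z)) : seq (X * Y * Z) :=
  [seq (alX p.1.1, alY p.1.2, alZ p.2) | p <- s].

Definition hom_assoc3 (X Y Z : lmodType K)
  (mul : seq (X * Y * Z) -> seq (X * Y * Z) -> seq (X * Y * Z))
  (al : seq (X * Y * Z) -> seq (X * Y * Z)) : Prop :=
  [/\ forall s s' t t', teq3 s s' -> teq3 t t' -> teq3 (mul s t) (mul s' t'),
      forall s s', teq3 s s' -> teq3 (al s) (al s'),
      forall s t, teq3 (al (mul s t)) (mul (al s) (al t)) &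
      forall s t u, teq3 (mul (al s) (mul t u)) (mul (mul s t) (al u))].
End Tensors.

From mathcomp Require Import all_boot all_algebra.
Set Implicit Arguments.
Unset Strict Implicit.
Unset Printing Implicit Defensive.
Import GRing.Theory.
Local Open Scope ring_scope.

(* Hom-coassociativity in the form
   (Delta (x) id) Delta(h) = (alpha (x) id (x) alpha^-1) (id (x) Delta) Delta(h)
   ([dsum_coassocV]) is what rebrackets iterated coproducts: with it, the
   twisting axioms for R1 and R2 reduce to the module-algebra axioms, and the
   braid relation is immediate because R3 is the flip.  For Hom-associativity,
   both (XY) alpha(Z) and alpha(X) (YZ) expand into a sum over the twice iterated
   coproducts of the three H-components ([smash_assoc_left_nf],
   [smash_assoc_right_nf]), and the summands agree componentwise by
   Hom-associativity of A, H and C together with the module conditions. *)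

Section Tensors.
Variable K : fieldType.
Implicit Types U V X Y Z W : lmodType K.

Lemma islin0 U V (f : U -> V) : islin f -> f 0 = 0.
Proof.
move=> hf; have := hf 1 0 0; rewrite !scale1r !addr0 -[in LHS](addr0 (f 0)) => h.
by rewrite (addrI _ h).
Qed.

Lemma islinD U V (f : U -> V) x y : islin f -> f (x + y) = f x + f y.
Proof. by move=> hf; have := hf 1 x y; rewrite !scale1r. Qed.

Lemma islinZ U V (f : U -> V) a x : islin f -> f (a *: x) = a *: f x.
Proof. by move=> hf; have := hf a x 0; rewrite !addr0 (islin0 hf) addr0. Qed.

Lemma islin_sum U V (f : U -> V) I (s : seq I) (F : I -> U) : islin f ->
  f (\sum_(p <- s) F p) = \sum_(p <- s) f (F p).
Proof.
move=> hf; elim: s => [|p s IH]; first by rewrite !big_nil (islin0 hf).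
by rewrite !big_cons islinD // IH.
Qed.

Lemma islin_id U : islin (fun x : U => x). Proof. by []. Qed.

Lemma islin_comp U V W (g : V -> W) (e : U -> V) :
  islin g -> islin e -> islin (fun x => g (e x)).
Proof. by move=> hg he a x y; rewrite he hg. Qed.

Lemma islin_bilinl U V X W (g : V -> X -> W) (e : U -> V) b :
  bilin g -> islin e -> islin (fun x => g (e x) b).
Proof. by move=> [_ hg] he a x y; rewrite he hg. Qed.

Lemma islin_bilinr U V X W (g : X -> V -> W) (e : U -> V) b :
  bilin g -> islin e -> islin (fun x => g b (e x)).
Proof. by move=> [hg _] he a x y; rewrite he hg. Qed.

Lemma islin_trilin1 U V X Y W (g : V -> X -> Y -> W) (e : U -> V) b c :
  trilin g -> islin e -> islin (fun x => g (e x) b c).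
Proof. by move=> [_ _ hg] he a x y; rewrite he hg. Qed.

Lemma islin_trilin2 U V X Y W (g : X -> V -> Y -> W) (e : U -> V) b c :
  trilin g -> islin e -> islin (fun x => g b (e x) c).
Proof. by move=> [_ hg _] he a x y; rewrite he hg. Qed.

Lemma islin_trilin3 U V X Y W (g : X -> Y -> V -> W) (e : U -> V) b c :
  trilin g -> islin e -> islin (fun x => g b c (e x)).
Proof. by move=> [hg _ _] he a x y; rewrite he hg. Qed.

Lemma islin_sumf U W I (s : seq I) (F : I -> U -> W) :
  (forall p, islin (F p)) -> islin (fun x => \sum_(p <- s) F p x).
Proof.
by move=> hF a x y; rewrite scaler_sumr -big_split; apply: eq_bigr => p _; apply: hF.
Qed.

Lemma islin_can U V (f : U -> V) (g : V -> U) :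
  islin f -> cancel f g -> cancel g f -> islin g.
Proof. by move=> hf fK gK a x y; apply: (can_inj fK); rewrite hf !gK. Qed.

Lemma teq3_trans X Y Z (s1 s2 s3 : seq (X * Y * Z)) :
  teq3 s1 s2 -> teq3 s2 s3 -> teq3 s1 s3.
Proof. by move=> e1 e2 W f tf; rewrite (e1 W f tf) (e2 W f tf). Qed.

Lemma hom_twisting_flip X Y (muX : X -> X -> X) alX (muY : Y -> Y -> Y) alY :
  hom_twisting muX alX muY alY (fun y x => [:: (x, y)]).
Proof. by split=> * W f bf. Qed.

End Tensors.

Lemma inv_morph2 (T : Type) (f g : T -> T) (op : T -> T -> T) :
  cancel f g -> cancel g f -> {morph f : x y / op x y} -> {morph g : x y / op x y}.
Proof. by move=> fK gK fM x y; apply: (can_inj fK); rewrite gK fM !gK. Qed.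

Create HintDb linearity.

Section HomBialgebra.
Variables (K : fieldType) (H : lmodType K) (muH : H -> H -> H)
  (Delta : H -> seq (H * H)) (alH alHi : H -> H).
Hypotheses (hH : hom_bialg muH Delta alH)
  (alH_K : cancel alH alHi) (alHi_K : cancel alHi alH).

(* [dsum g h] is the Sweedler sum [g h_1 h_2]; [dsum3 g h] is [g h_1 h_21 h_22]. *)
Definition dsum (W : lmodType K) (g : H -> H -> W) h := \sum_(p <- Delta h) g p.1 p.2.

Definition dsum3 (W : lmodType K) (g : H -> H -> H -> W) :=
  dsum (fun x y => dsum (g x) y).

Lemma dsumE (W : lmodType K) (F : H * H -> W) h :
  \sum_(p <- Delta h) F p = dsum (fun u v => F (u, v)) h.
Proof. by apply: eq_bigr => -[]. Qed.

Lemma eq_dsum (W : lmodType K) (g g' : H -> H -> W) h :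
  (forall u v, g u v = g' u v) -> dsum g h = dsum g' h.
Proof. by move=> e; apply: eq_bigr => p _; rewrite e. Qed.

Lemma eq_dsum3 (W : lmodType K) (g g' : H -> H -> H -> W) h :
  (forall x y z, g x y z = g' x y z) -> dsum3 g h = dsum3 g' h.
Proof. by move=> e; apply: eq_dsum => x y; apply: eq_dsum => y1 y2. Qed.

Lemma exchange_dsum (W : lmodType K) (G : H -> H -> H -> H -> W) h h' :
  dsum (fun u v => dsum (G u v) h') h = dsum (fun u' v' => dsum (fun u v => G u v u' v') h) h'.
Proof. exact: exchange_big. Qed.

Lemma linear_dsum (W W' : lmodType K) (E : W -> W') g h : islin E ->
  E (dsum g h) = dsum (fun u v => E (g u v)) h.
Proof. exact: islin_sum. Qed.

Lemma islin_dsumf (U W : lmodType K) (G : U -> H -> H -> W) h :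
  (forall u v, islin (fun x => G x u v)) -> islin (fun x => dsum (G x) h).
Proof. by move=> hG; apply: islin_sumf => p; apply: hG. Qed.

Lemma bilin_muH : bilin muH. Proof. by case: hH => -[]. Qed.
Lemma islin_alH : islin alH. Proof. by case: hH => -[]. Qed.
Lemma alH_muH : {morph alH : x y / muH x y}. Proof. by case: hH => -[]. Qed.
Lemma muH_homA x y z : muH (alH x) (muH y z) = muH (muH x y) (alH z).
Proof. by case: hH => -[]. Qed.
Lemma islin_alHi : islin alHi. Proof. exact: islin_can islin_alH alH_K alHi_K. Qed.
Lemma alHi_muH : {morph alHi : x y / muH x y}. Proof. exact: inv_morph2 alH_muH. Qed.

Lemma islin_dsum (W : lmodType K) (g : H -> H -> W) : bilin g -> islin (dsum g).
Proof.
move=> bg a h h'; case: hH => _ hl _ _ _.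
rewrite /dsum (hl a h h' W g bg) big_cat big_map /= scaler_sumr; congr (_ + _).
by apply: eq_bigr => p _; rewrite (islinZ _ _ (bg.2 _)).
Qed.

Lemma islin_dsum_comp (U W : lmodType K) (g : H -> H -> W) (e : U -> H) :
  bilin g -> islin e -> islin (fun x => dsum g (e x)).
Proof. by move=> bg he; apply: islin_comp => //; apply: islin_dsum. Qed.

Hint Resolve bilin_muH islin_alH islin_alHi : linearity.

Ltac lin_hyp := first [eassumption | solve [auto with linearity]].

(* Closes linearity side conditions by decomposing the function syntactically. *)
Ltac lin := first
 [ exact: islin_id
 | solve [apply: islin_sumf => ?; lin]
 | solve [apply: islin_dsumf => ? ?; lin]
 | solve [apply: islin_dsum_comp; [bil | lin]]
 | solve [apply: islin_trilin1; [lin_hyp | lin]]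
 | solve [apply: islin_trilin2; [lin_hyp | lin]]
 | solve [apply: islin_trilin3; [lin_hyp | lin]]
 | solve [apply: islin_bilinl; [lin_hyp | lin]]
 | solve [apply: islin_bilinr; [lin_hyp | lin]]
 | solve [apply: islin_comp; [lin_hyp | lin]] ]
with bil := split => ?; lazy beta; lin.

Ltac tril := split => ? ?; lazy beta; lin.

(* Turns sums over flattened/mapped lists of coproduct terms into nested [dsum]s. *)
Ltac to_dsum1 :=
  repeat progress rewrite ?big_map ?big_allpairs_dep ?big_flatten ?big_cons ?big_nil ?addr0 /=;
  try rewrite dsumE; try (under eq_dsum => ? ? do to_dsum1).
Ltac to_dsum := to_dsum1; symmetry; to_dsum1; symmetry.

(* Pulls the context around a [dsum g h0] inside the sum, via [linear_dsum]. *)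
Ltac pull_dsum h0 :=
  let doit L :=
    match L with context Ctx [@dsum ?W ?g h0] =>
      let E := constr:(fun X : W => ltac:(let t := context Ctx [X] in exact t)) in
      rewrite (@linear_dsum W _ E g h0); [| lin] end in
  lazymatch goal with
  | |- Under_rel _ _ ?L _ => doit L
  | |- ?L = _ => doit L end.

Lemma dsum_alH (W : lmodType K) (g : H -> H -> W) h : bilin g ->
  dsum g (alH h) = dsum (fun u v => g (alH u) (alH v)) h.
Proof. by move=> bg; case: hH => _ _ _ _ hd; rewrite /dsum (hd h W g bg) big_map. Qed.

Lemma dsum_alHi (W : lmodType K) (g : H -> H -> W) h : bilin g ->
  dsum g (alHi h) = dsum (fun u v => g (alHi u) (alHi v)) h.
Proof.
move=> bg; rewrite -{2}(alHi_K h) dsum_alH; last by bil.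
by apply: eq_dsum => u v; rewrite !alH_K.
Qed.

Lemma dsum_muH (W : lmodType K) (g : H -> H -> W) h h' : bilin g ->
  dsum g (muH h h') = dsum (fun u v => dsum (fun u' v' => g (muH u u') (muH v v')) h') h.
Proof.
by move=> bg; case: hH => _ _ _ hd _; rewrite /dsum (hd h h' W g bg) big_allpairs_dep.
Qed.

Lemma dsum_coassoc (W : lmodType K) (g : H -> H -> H -> W) h : trilin g ->
  dsum (fun u v => dsum (fun u' v' => g u' v' (alH v)) u) h =
  dsum3 (fun x y z => g (alH x) y z) h.
Proof. by move=> tg; case: hH => _ _ hd _ _; have := hd h W g tg; rewrite !big_allpairs_dep. Qed.

Lemma dsum_coassocV (W : lmodType K) (g : H -> H -> H -> W) h : trilin g ->
  dsum (fun u v => dsum (fun u' v' => g u' v' v) u) h =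
  dsum3 (fun x y z => g (alH x) y (alHi z)) h.
Proof.
move=> tg; rewrite -(dsum_coassoc (g := fun a b c => g a b (alHi c))); last by tril.
by apply: eq_dsum => u v; apply: eq_dsum => u' v'; rewrite alH_K.
Qed.

Section Modules.
Variables (A : lmodType K) (muA : A -> A -> A) (alA alAi : A -> A) (act : H -> A -> A)
  (C : lmodType K) (muC : C -> C -> C) (alC alCi : C -> C) (ract : C -> H -> C).
Hypotheses (hA : left_mod_hom_alg muH Delta alH muA alA act)
  (hC : right_mod_hom_alg muH Delta alH muC alC ract)
  (alA_K : cancel alA alAi) (alAi_K : cancel alAi alA)
  (alC_K : cancel alC alCi) (alCi_K : cancel alCi alC).

Lemma bilin_muA : bilin muA. Proof. by case: hA => -[]. Qed.
Lemma islin_alA : islin alA. Proof. by case: hA => -[]. Qed.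
Lemma alA_muA : {morph alA : x y / muA x y}. Proof. by case: hA => -[]. Qed.
Lemma muA_homA x y z : muA (alA x) (muA y z) = muA (muA x y) (alA z).
Proof. by case: hA => -[]. Qed.
Lemma islin_alAi : islin alAi. Proof. exact: islin_can islin_alA alA_K alAi_K. Qed.
Lemma alAi_muA : {morph alAi : x y / muA x y}. Proof. exact: inv_morph2 alA_muA. Qed.
Lemma bilin_act : bilin act. Proof. by case: hA. Qed.
Lemma alA_act h a : alA (act h a) = act (alH h) (alA a). Proof. by case: hA. Qed.
Lemma act_homA h h' a : act (alH h) (act h' a) = act (muH h h') (alA a).
Proof. by case: hA. Qed.

Lemma bilin_muC : bilin muC. Proof. by case: hC => -[]. Qed.
Lemma islin_alC : islin alC. Proof. by case: hC => -[]. Qed.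
Lemma alC_muC : {morph alC : x y / muC x y}. Proof. by case: hC => -[]. Qed.
Lemma muC_homA x y z : muC (alC x) (muC y z) = muC (muC x y) (alC z).
Proof. by case: hC => -[]. Qed.
Lemma islin_alCi : islin alCi. Proof. exact: islin_can islin_alC alC_K alCi_K. Qed.
Lemma alCi_muC : {morph alCi : x y / muC x y}. Proof. exact: inv_morph2 alC_muC. Qed.
Lemma bilin_ract : bilin ract. Proof. by case: hC. Qed.
Lemma alC_ract c h : alC (ract c h) = ract (alC c) (alH h). Proof. by case: hC. Qed.
Lemma ract_homA c h h' : ract (ract c h) (alH h') = ract (alC c) (muH h h').
Proof. by case: hC. Qed.
Lemma alCi_ract c h : alCi (ract c h) = ract (alCi c) (alHi h).
Proof. by apply: (can_inj alC_K); rewrite alCi_K alC_ract !alCi_K alHi_K. Qed.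

Hint Resolve bilin_muA islin_alA islin_alAi bilin_act : linearity.
Hint Resolve bilin_muC islin_alC islin_alCi bilin_ract : linearity.

Lemma act_muA h a a' :
  act h (muA a a') = dsum (fun u v => muA (act (alHi (alHi u)) a) (act (alHi (alHi v)) a')) h.
Proof.
case: hA => _ _ _ _ hm; rewrite -{1}(alHi_K h) -(alHi_K (alHi h)) hm dsumE /=.
by rewrite !dsum_alHi //; bil.
Qed.

Lemma ract_muC h c c' :
  ract (muC c c') h = dsum (fun u v => muC (ract c (alHi (alHi u))) (ract c' (alHi (alHi v)))) h.
Proof.
case: hC => _ _ _ _ hm; rewrite -{1}(alHi_K h) -(alHi_K (alHi h)) hm dsumE /=.
by rewrite !dsum_alHi //; bil.
Qed.

Definition twistAH (h : H) (a : A) : seq (A * H) :=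
  [seq (act (alHi (alHi p.1)) (alAi a), alHi p.2) | p <- Delta h].

Definition twistHC (c : C) (h : H) : seq (H * C) :=
  [seq (alHi p.1, ract (alCi c) (alHi (alHi p.2))) | p <- Delta h].

Lemma hom_twisting_twistAH : hom_twisting muA alA muH alH twistAH.
Proof.
split=> [h a | h a a' | h h' a] W f bf; rewrite /twistAH; to_dsum.
- rewrite dsum_alH; last by bil.
  by apply: eq_dsum => u v; rewrite alA_act !alHi_K alAi_K alA_K !alH_K.
- rewrite dsum_alH; last by bil.
  under eq_dsum => u v.
    rewrite !alH_K alAi_muA act_muA (linear_dsum (E := fun X => f X v)); last by lin.
    rewrite dsum_alHi; last by bil.
    over.
  rewrite dsum_coassocV; last by tril.
  apply: eq_dsum => u v; rewrite dsum_alHi; last by bil.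
  by apply: eq_dsum => u' v'; rewrite !alHi_K !alH_K.
- rewrite dsum_muH; last by bil.
  symmetry; rewrite exchange_dsum; apply: eq_dsum => u v; apply: eq_dsum => u' v'.
  rewrite alA_act alAi_K alHi_K !alHi_muH -{1}[alHi u](alHi_K (alHi u)).
  by rewrite act_homA alAi_K alA_K.
Qed.

Lemma hom_twisting_twistHC : hom_twisting muH alH muC alC twistHC.
Proof.
split=> [c h | c h h' | c c' h] W f bf; rewrite /twistHC; to_dsum.
- rewrite dsum_alH; last by bil.
  by apply: eq_dsum => u v; rewrite alC_ract !alHi_K alCi_K alC_K !alH_K.
- rewrite dsum_muH; last by bil.
  apply: eq_dsum => u v; apply: eq_dsum => u' v'.
  by rewrite alC_K alCi_ract -(alHi_K (alHi (alHi v'))) ract_homA alC_ract !alCi_K alH_muH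
    !alHi_K !alHi_muH.
- rewrite dsum_alH; last by bil.
  under eq_dsum => u v.
    rewrite !alH_K alCi_muC ract_muC (linear_dsum (E := fun X => f u X)); last by lin.
    rewrite dsum_alHi; last by bil.
    over.
  symmetry.
  under eq_dsum => u v.
    rewrite dsum_alHi; last by bil.
    over.
  rewrite dsum_coassocV; last by tril.
  by apply: eq_dsum => u v; apply: eq_dsum => u' v'; rewrite alH_K alHi_K.
Qed.

Lemma braid_twist s :
  teq3 (tens_r twistHC (tens_l (fun c a => [:: (a, c)]) (tens_r twistAH s)))
       (tens_l twistAH (tens_r (fun c a => [:: (a, c)]) (tens_l twistHC s))).
Proof.
move=> W f tf; rewrite /tens_r /tens_l !(big_flatten, big_map).
apply: eq_bigr => -[[c h] a] _ /=; rewrite /twistAH /twistHC; to_dsum.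
under eq_dsum => u v.
  rewrite dsum_alHi; last by bil.
  over.
symmetry.
under eq_dsum => u v.
  rewrite dsum_alHi; last by bil.
  over.
rewrite dsum_coassocV; last by tril.
by apply: eq_dsum => u v; apply: eq_dsum => u' v'; rewrite alH_K.
Qed.


Definition smash_pure := itp_pure muA muH muC twistAH twistHC (fun c a => [:: (a, c)]).
Definition smash_mul := itp muA muH muC twistAH twistHC (fun c a => [:: (a, c)]).
Definition smash_al := alpha3 alA alH alC.

(* [smash_eval f x y z v] is [f] applied to [(x # y # z) v], in Sweedler form. *)
Definition smash_eval (W : lmodType K) (f : A -> H -> C -> W) x y z (v : A * H * C) :=
  dsum (fun u1 v1 => dsum (fun u2 v2 =>
    f (muA x (act (alHi (alHi u1)) (alAi v.1.1))) (muH (alHi v1) (alHi u2))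
      (muC (ract (alCi z) (alHi (alHi v2))) v.2)) v.1.2) y.

Lemma big_smash_pure (W : lmodType K) (F : A * H * C -> W) u v :
  \sum_(w <- smash_pure u v) F w =
  dsum (fun u1 v1 => dsum (fun u2 v2 =>
    F (muA u.1.1 (act (alHi (alHi u1)) (alAi v.1.1)), muH (alHi v1) (alHi u2),
       muC (ract (alCi u.2) (alHi (alHi v2))) v.2)) v.1.2) u.1.2.
Proof. by rewrite /smash_pure /itp_pure /twistAH /twistHC; to_dsum. Qed.

Lemma big_smash_mul (W : lmodType K) (F : A * H * C -> W) s t :
  \sum_(w <- smash_mul s t) F w =
  \sum_(u <- s) \sum_(v <- t) \sum_(w <- smash_pure u v) F w.
Proof. by rewrite /smash_mul /itp big_flatten /= big_allpairs_dep. Qed.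

Lemma big_smash_mul_eval (W : lmodType K) (f : A -> H -> C -> W) s t :
  \sum_(w <- smash_mul s t) f w.1.1 w.1.2 w.2 =
  \sum_(u <- s) \sum_(v <- t) smash_eval f u.1.1 u.1.2 u.2 v.
Proof.
rewrite big_smash_mul.
by apply: eq_bigr => u _; apply: eq_bigr => v _; rewrite big_smash_pure.
Qed.

Lemma teq3_smash_mull s s' t : teq3 s s' -> teq3 (smash_mul s t) (smash_mul s' t).
Proof.
move=> hs W f tf; rewrite !big_smash_mul_eval.
apply: (hs W (fun x y z => \sum_(v <- t) smash_eval f x y z v)).
rewrite /smash_eval; tril.
Qed.

Lemma teq3_smash_mulr s t t' : teq3 t t' -> teq3 (smash_mul s t) (smash_mul s t').
Proof.
move=> ht W f tf; rewrite !big_smash_mul_eval exchange_big [RHS]exchange_big.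
apply: (ht W (fun x y z => \sum_(v <- s) smash_eval f v.1.1 v.1.2 v.2 (x, y, z))).
rewrite /smash_eval /=; tril.
Qed.

Lemma teq3_smash_mul s s' t t' :
  teq3 s s' -> teq3 t t' -> teq3 (smash_mul s t) (smash_mul s' t').
Proof. by move=> hs ht; apply: teq3_trans (teq3_smash_mull t hs) (teq3_smash_mulr s' ht). Qed.

Lemma teq3_smash_al s s' : teq3 s s' -> teq3 (smash_al s) (smash_al s').
Proof.
move=> hs W f tf; rewrite /smash_al /alpha3 !big_map /=.
by apply: (hs W (fun x y z => f (alA x) (alH y) (alC z))); tril.
Qed.

Lemma smash_al_mul s t : teq3 (smash_al (smash_mul s t)) (smash_mul (smash_al s) (smash_al t)).
Proof.
move=> W f tf; rewrite /smash_al /alpha3 big_map /=.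
rewrite (big_smash_mul_eval (fun x y z => f (alA x) (alH y) (alC z))) big_smash_mul_eval big_map.
apply: eq_bigr => u _; rewrite big_map; apply: eq_bigr => v _.
rewrite /smash_eval /= dsum_alH; last by bil.
apply: eq_dsum => u1 v1; rewrite dsum_alH; last by bil.
apply: eq_dsum => u2 v2.
by rewrite alA_muA alA_act alAi_K !alHi_K alA_K alH_muH !alHi_K !alH_K
  alC_muC alC_ract alCi_K alC_K !alHi_K.
Qed.

Lemma smash_assoc_componentA a x m p a'' :
  muA (alA a) (muA x (act (alHi (alHi (alHi m))) (alAi (act (alHi (alHi p)) (alAi a''))))) =
  muA (muA a x) (act (alHi (alHi (muH (alHi m) p))) a'').
Proof. by rewrite muA_homA alA_act alAi_K act_homA alAi_K !alHi_muH. Qed.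

Lemma smash_assoc_componentH m s q :
  muH (alHi m) (alHi (muH (alHi s) q)) = muH (alHi (muH (alHi m) (alHi s))) q.
Proof. by rewrite !alHi_muH -{2}(alHi_K q) -muH_homA alHi_K. Qed.

Lemma smash_assoc_componentC c y s k c'' :
  muC (ract c (alHi (alHi (muH (alHi s) (alHi k))))) (muC y c'') =
  muC (muC (ract (alCi (ract (alCi c) (alHi (alHi (alHi s))))) (alHi (alHi (alHi k)))) y)
    (alC c'').
Proof. by rewrite !alHi_muH -muC_homA alC_ract alCi_K ract_homA alCi_K. Qed.

Section Associativity.
Variables (W : lmodType K) (f : A -> H -> C -> W).
Hypothesis tf : trilin f.
Variables (a a' a'' : A) (h h' h'' : H) (c c' c'' : C).

Lemma smash_assoc_left_nf :
  \sum_(y <- smash_pure (a, h, c) (a', h', c'))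
    smash_eval f y.1.1 y.1.2 y.2 (alA a'', alH h'', alC c'') =
  dsum3 (fun r1 m1 m2 => dsum3 (fun p1 s1 s2 => dsum3 (fun q1 k1 k2 =>
    f (muA (muA a (act (alHi (alHi r1)) (alAi a'))) (act (alHi (alHi (muH (alHi m1) p1))) a''))
      (muH (alHi (muH (alHi m2) (alHi s1))) q1)
      (muC (muC (ract (alCi (ract (alCi c) (alHi (alHi (alHi s2))))) (alHi (alHi (alHi k1))))
                (ract (alCi c') (alHi (alHi (alHi k2)))))
           (alC c''))) h'') h') h.
Proof.
rewrite big_smash_pure /smash_eval /=.
under eq_dsum => r1 r2.
  under eq_dsum => p1 p2.
    rewrite dsum_muH; last by bil.
    rewrite dsum_alHi; last by bil.
    under eq_dsum => m1 m2.
      rewrite dsum_alHi; last by bil.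
      under eq_dsum => n1 n2.
        rewrite dsum_alH; last by bil.
        under eq_dsum => q1 q2.
          rewrite !alH_K alCi_muC ract_muC.
          pull_dsum (alHi q2).
          rewrite dsum_alHi; last by bil.
          over.
        over.
      over.
    over.
  rewrite exchange_dsum.
  over.
apply: eq_dsum => r1 r2; apply: eq_dsum => m1 m2.
rewrite dsum_coassocV; last by tril.
apply: eq_dsum => p1 p2; apply: eq_dsum => s1 s2.
apply: eq_dsum => q1 q2; apply: eq_dsum => k1 k2.
by rewrite alH_K alA_K.
Qed.

Lemma smash_assoc_right_nf :
  \sum_(y <- smash_pure (a', h', c') (a'', h'', c'')) smash_eval f (alA a) (alH h) (alC c) y =
  dsum3 (fun r1 m1 m2 => dsum3 (fun p1 s1 s2 => dsum3 (fun q1 k1 k2 =>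
    f (muA (alA a) (muA (act (alHi (alHi r1)) (alAi a'))
                        (act (alHi (alHi (alHi m1))) (alAi (act (alHi (alHi p1)) (alAi a''))))))
      (muH (alHi m2) (alHi (muH (alHi s1) q1)))
      (muC (ract c (alHi (alHi (muH (alHi s2) (alHi k1)))))
           (muC (ract (alCi c') (alHi (alHi (alHi k2)))) c''))) h'') h') h.
Proof.
rewrite big_smash_pure /smash_eval /=.
under eq_dsum => p1 p2 do rewrite exchange_dsum.
rewrite exchange_dsum dsum_alH; last by bil.
under eq_dsum => r1 r2.
  under eq_dsum => p1 p2.
    rewrite alH_K alAi_muA act_muA.
    pull_dsum (alHi r1).
    rewrite dsum_alHi; last by bil.
    over.
  rewrite exchange_dsum.
  over.
rewrite dsum_coassocV; last by tril.
apply: eq_dsum => r1 r2; apply: eq_dsum => m1 m2.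
under eq_dsum => p1 p2.
  under eq_dsum => q1 q2.
    rewrite dsum_muH; last by bil.
    rewrite dsum_alHi; last by bil.
    under eq_dsum => s1 s2.
      rewrite dsum_alHi; last by bil.
      over.
    over.
  rewrite exchange_dsum.
  over.
apply: eq_dsum => p1 p2; apply: eq_dsum => s1 s2.
rewrite dsum_coassocV; last by tril.
apply: eq_dsum => q1 q2; apply: eq_dsum => k1 k2.
by rewrite !alH_K alC_K.
Qed.

Lemma smash_assoc_pure :
  \sum_(y <- smash_pure (a', h', c') (a'', h'', c'')) smash_eval f (alA a) (alH h) (alC c) y =
  \sum_(y <- smash_pure (a, h, c) (a', h', c'))
    smash_eval f y.1.1 y.1.2 y.2 (alA a'', alH h'', alC c'').
Proof.
rewrite smash_assoc_left_nf smash_assoc_right_nf.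
apply: eq_dsum3 => r1 m1 m2; apply: eq_dsum3 => p1 s1 s2; apply: eq_dsum3 => q1 k1 k2.
by rewrite smash_assoc_componentA smash_assoc_componentH smash_assoc_componentC.
Qed.

End Associativity.

Lemma smash_assoc s t u :
  teq3 (smash_mul (smash_al s) (smash_mul t u)) (smash_mul (smash_mul s t) (smash_al u)).
Proof.
move=> W f tf; rewrite big_smash_mul_eval /smash_al /alpha3 big_map.
under eq_bigr => x _ do rewrite big_smash_mul.
symmetry; rewrite big_smash_mul_eval exchange_big big_map.
under eq_bigr => w _ do rewrite big_smash_mul.
rewrite exchange_big; apply: eq_bigr => -[[a h] c] _.
rewrite exchange_big; apply: eq_bigr => -[[a' h'] c'] _.
apply: eq_bigr => -[[a'' h''] c''] _ /=.
by rewrite smash_assoc_pure.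
Qed.

Lemma smash_pureE a a' h h' c c' :
  teq3 (smash_pure (a, h, c) (a', h', c'))
    [seq (muA a (act (alHi (alHi p.1)) (alAi a')), alHi (muH p.2 q.1),
          muC (ract (alCi c) (alHi (alHi q.2))) c') | p <- Delta h, q <- Delta h'].
Proof.
move=> W f tf; rewrite big_smash_pure /=; to_dsum.
by apply: eq_dsum => u v; apply: eq_dsum => u' v'; rewrite alHi_muH.
Qed.

End Modules.
End HomBialgebra.

Theorem proposition3p16 (K : fieldType)
  (H : lmodType K) (muH : H -> H -> H) (Delta : H -> seq (H * H)) (alH alHi : H -> H)
  (A : lmodType K) (muA : A -> A -> A) (alA alAi : A -> A) (act : H -> A -> A)
  (C : lmodType K) (muC : C -> C -> C) (alC alCi : C -> C) (ract : C -> H -> C)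
  (hH : hom_bialg muH Delta alH)
  (hA : left_mod_hom_alg muH Delta alH muA alA act)
  (hC : right_mod_hom_alg muH Delta alH muC alC ract)
  (alH_K : cancel alH alHi) (alHi_K : cancel alHi alH)
  (alA_K : cancel alA alAi) (alAi_K : cancel alAi alA)
  (alC_K : cancel alC alCi) (alCi_K : cancel alCi alC) :
  let R1 : H -> A -> seq (A * H) := fun h a =>
    [seq (act (alHi (alHi p.1)) (alAi a), alHi p.2) | p <- Delta h] in
  let R2 : C -> H -> seq (H * C) := fun c h =>
    [seq (alHi p.1, ract (alCi c) (alHi (alHi p.2))) | p <- Delta h] in
  let R3 : C -> A -> seq (A * C) := fun c a => [:: (a, c)] in
  [/\ [/\ hom_twisting muA alA muH alH R1,
          hom_twisting muH alH muC alC R2 &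
          hom_twisting muA alA muC alC R3],
      forall s : seq (C * H * A),
        teq3 (tens_r R2 (tens_l R3 (tens_r R1 s)))
             (tens_l R1 (tens_r R3 (tens_l R2 s))),
      hom_assoc3 (itp muA muH muC R1 R2 R3) (alpha3 alA alH alC) &
      forall (a a' : A) (h h' : H) (c c' : C),
        teq3 (itp_pure muA muH muC R1 R2 R3 (a, h, c) (a', h', c'))
             [seq (muA a (act (alHi (alHi p.1)) (alAi a')),
                   alHi (muH p.2 q.1),
                   muC (ract (alCi c) (alHi (alHi q.2))) c')
                | p <- Delta h, q <- Delta h']].
Proof.
move=> R1 R2 R3; split.
- by split; [apply: hom_twisting_twistAH | apply: hom_twisting_twistHC | apply: hom_twisting_flip].
- exact: (braid_twist hH alH_K alHi_K alAi alCi hA hC).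
- split.
  + exact: (teq3_smash_mul hH alH_K alHi_K hA hC alA_K alAi_K alC_K alCi_K).
  + exact: (teq3_smash_al hH hA hC).
  + exact: (smash_al_mul hH alH_K alHi_K hA hC alA_K alAi_K alC_K alCi_K).
  + exact: (smash_assoc hH alH_K alHi_K hA hC alA_K alAi_K alC_K alCi_K).
- exact: (smash_pureE hH alH_K alHi_K muA alAi act muC alCi ract).
Qed.
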